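(* The collection $\mathcal Q_{tree}$ is UME-learnable.
   Context: Index the nodes of an infinite complete binary tree by $\mathbb N$ in level order: the root is $1$, and node $m$ has left child $2m$ and right child $2m+1$. For an infinite binary string $b=(b_1,b_2,\dots)\in\{0,1\}^{\mathbb N}$, its branch is the sequence of nodes $v_0(b)=1$, $v_j(b)=2v_{j-1}(b)+b_j$ for $j\ge1$. Let $q^{(b)}\in[0,1]^{\mathbb N}$ be given by $q^{(b)}_m=\tfrac23$ if $m=v_j(b)$ for some $j\ge0$ and $q^{(b)}_m=\tfrac13$ otherwise. $\mathcal Q_{tree}=\{\mathrm{Prod}(q^{(b)}):b\in\{0,1\}^{\mathbb N}\}$, where $\mathrm{Prod}(q)$ is the product measure on $\{0,1\}^{\mathbb N}$ with independent coordinates $X_m\sim\mathrm{Bernoulli}(q_m)$. A collection $\mathcal Q$ of probability measures on $\{0,1\}^{\mathbb N}$ is UME-learnable if there exist (measurable) estimators $\mathcal A_n:(\{0,1\}^{\mathbb N})^n\to[0,1]^{\mathbb N}$ such that for every $\mu\in\mathcal Q$, $\mathbb E_{S\sim\mu^n}\|\mathcal A_n(S)-\mathrm{Mean}(\mu)\|_\infty\to0$ as $n\to\infty$, where $S$ consists of $n$ i.i.d. draws from $\mu$ and $\mathrm{Mean}(\mu)_j=\mathbb E[X_j]$. *)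

From HB Require Import structures.
From mathcomp Require Import all_boot all_order all_algebra.
From mathcomp Require Import all_classical all_reals all_analysis.
Set Implicit Arguments. Unset Strict Implicit. Unset Printing Implicit Defensive.
Import Order.TTheory GRing.Theory Num.Theory.
Local Open Scope classical_set_scope.
Local Open Scope ring_scope.

(* Branch of the infinite binary tree determined by b.
   The paper's bit b_{j} (j >= 1) is [b j.-1] here, i.e. b : nat -> bool is 0-indexed.
   branch_node b j = v_j(b): v_0 = 1, v_{j+1} = 2 v_j + b_{j+1}. *)
Fixpoint branch_node (b : nat -> bool) (j : nat) : nat :=
  match j with
  | 0 => 1
  | j'.+1 => (branch_node b j').*2 + b j'
  end.

Definition on_branch (b : nat -> bool) (m : nat) : Prop := exists j, branch_node b j = m.

(* Coordinates of {0,1}^N are indexed in Rocq by k : nat, and coordinate k stands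
   for the paper's coordinate / tree node m = k+1 (the paper's N starts at 1). *)
Definition qtree (R : realType) (b : nat -> bool) (k : nat) : R :=
  if `[< on_branch b k.+1 >] then 2 / 3 else 1 / 3.

Definition sample (n : nat) := 'I_n -> nat -> bool.

(* Cylinder generators of the product sigma-algebra on ({0,1}^N)^n. *)
Definition cyl (n : nat) : set (set (sample n)) :=
  [set E | exists (i : 'I_n) (m : nat) (c : bool), E = [set s | s i m = c]].
Arguments cyl : clear implicits.

(* A map sample n -> [0,1]^N is measurable (product sigma-algebras) iff every
   coordinate is measurable w.r.t. the cylinder sigma-algebra and the Borel sets of R. *)
Definition estimator_measurable (R : realType) (n : nat) (f : sample n -> nat -> R) : Prop :=
  forall (j : nat) (B : set R), measurable B -> <<s cyl n >> ((fun s => f s j) @^-1` B).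

Definition mutually_independent (R : realType) (d : measure_display) (T : measurableType d)
    (P : probability T R) (X : nat -> nat -> T -> bool) : Prop :=
  forall (F : seq (nat * nat)) (c : nat * nat -> bool), uniq F ->
    P [set w | all (fun p => X p.1 p.2 w == c p) F] =
    (\prod_(p <- F) P [set w | X p.1 p.2 w = c p])%E.

(* X is an i.i.d. sequence (indexed by the first argument) of draws from
   Prod(q): all coordinates independent, X k m ~ Bernoulli(q m). *)
Definition iid_product_bernoulli (R : realType) (d : measure_display) (T : measurableType d)
    (P : probability T R) (q : nat -> R) (X : nat -> nat -> T -> bool) : Prop :=
  [/\ forall k m, measurable [set w | X k m w],
      forall k m, P [set w | X k m w] = (q m)%:E &
      mutually_independent P X].

Definition sup_err (R : realType) (a q : nat -> R) : \bar R :=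
  ereal_sup (range (fun j => (`|a j - q j|)%:E)).

From HB Require Import structures.
From mathcomp Require Import all_boot all_order all_algebra.
From mathcomp Require Import all_classical all_reals all_analysis.
From mathcomp Require Import zify ring lra.
Import Order.TTheory GRing.Theory Num.Theory HBNNSimple.
Set Implicit Arguments. Unset Strict Implicit. Unset Printing Implicit Defensive.
Local Open Scope classical_set_scope.
Local Open Scope ring_scope.

(* The estimator walks down the tree from the root.  Standing at depth j on
   node v, it moves to the left child 2v iff some descending path of length
   2(j+1) from 2v carries at least half ones over the n samples.  If the branch
   turns right at v, every node below 2v has mean 1/3; if it turns left, the
   branch itself continues below 2v with mean 2/3.  Either way a union bound
   over bit patterns (each of probability at most (2/9)^(n(j+1))) and over the
   4^(j+1) paths shows that the step errs with probability at most
   (4 (8/9)^n)^(j+1).  Off these events the estimator follows the branch and is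
   exact, so the expected sup error is at most 8 (8/9)^n.  Each output
   coordinate reads finitely many input coordinates, hence measurability. *)

Section tree_walks.
Local Open Scope nat_scope.

Fixpoint descend (c : nat) (t : nat -> bool) (k : nat) : nat :=
  if k is k'.+1 then (descend c t k').*2 + t k' else c.

Lemma branch_nodeD b j k :
  branch_node b (j + k) = descend (branch_node b j) (fun i => b (j + i)) k.
Proof. by elim: k => [|k IH]; rewrite ?addn0 // addnS /= IH. Qed.

Lemma branch_node_descend b j : branch_node b j = descend 1 b j.
Proof. by rewrite -[j]add0n branch_nodeD. Qed.

Lemma descend_ge c t k : c * 2 ^ k <= descend c t k.
Proof. by elim: k => [|k IH] /=; rewrite ?muln1 // expnS; lia. Qed.

Lemma descend_lt c t k : descend c t k < c.+1 * 2 ^ k.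
Proof. by elim: k => [|k IH] /=; rewrite ?muln1 // expnS; lia. Qed.

Lemma descend_gt0 c t k : 0 < c -> 0 < descend c t k.
Proof. by move=> c0; elim: k => //= k IH; lia. Qed.

Lemma descend_inj c t : 0 < c -> injective (descend c t).
Proof.
move=> c0; apply/incn_inj/leq_mono/(homo_ltn ltn_trans) => k /=.
by have := descend_gt0 t k c0; lia.
Qed.

Lemma descend_ext c t t' k :
  {in gtn k, t =1 t'} -> descend c t k = descend c t' k.
Proof.
elim: k => [//|k IH] tt' /=; rewrite tt' ?inE // IH // => i /ltnW ik.
exact: tt'.
Qed.

Lemma branch_node_gt0 b j : 0 < branch_node b j.
Proof. by rewrite branch_node_descend descend_gt0. Qed.

Lemma branch_node_gt b j : j < branch_node b j.
Proof.
rewrite branch_node_descend; apply: leq_trans (ltn_expl j (isT : 1 < 2)) _.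
by rewrite -[2 ^ j]mul1n descend_ge.
Qed.

Lemma branch_node_lt b j : branch_node b j < 2 ^ j.+1.
Proof. by rewrite branch_node_descend expnS; exact: descend_lt. Qed.

Lemma branch_node_inj b : injective (branch_node b).
Proof. by move=> j j'; rewrite !branch_node_descend; apply: descend_inj. Qed.

Lemma descend_off_branch b c t k :
  0 < c -> ~ on_branch b c -> ~ on_branch b (descend c t k).
Proof.
move=> c0 nbc; elim: k => [//|k IH] [[|j] /= e].
  by have := descend_gt0 t k c0; lia.
by apply: IH; exists j; lia.
Qed.

End tree_walks.

Section finitely_determined.
Variables (U : Type) (I : eqType) (Z : I -> U -> bool) (M : set (set U)).
Hypotheses (M0 : M set0) (MC : forall A, M A -> M (~` A))
  (MU : forall A B, M A -> M B -> M (A `|` B)) (MZ : forall i, M [set u | Z i u]).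

Definition pattern (F : seq I) (c : seq bool) := [set u | map (Z^~ u) F = c].

Lemma pattern_in F c : M (pattern F c).
Proof.
have MI A B : M A -> M B -> M (A `&` B).
  by move=> MA MB; rewrite -[A `&` B]setCK setCI; apply/MC/MU; apply: MC.
have MZb i x : M [set u | Z i u = x].
  case: x; first exact: MZ.
  rewrite (_ : [set _ | _] = ~` [set u | Z i u]); first exact/MC/MZ.
  by apply/seteqP; split => u /=; [move=> -> | move/negP/negbTE].
elim: F c => [|i F IH] [|x c].
- rewrite (_ : pattern _ _ = setT); last by apply/seteqP; split.
  by rewrite -setC0; apply: MC.
- by rewrite (_ : pattern _ _ = set0) //; apply/seteqP; split.
- by rewrite (_ : pattern _ _ = set0) //; apply/seteqP; split.
rewrite (_ : pattern _ _ = [set u | Z i u = x] `&` pattern F c); first exact: MI.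
by apply/seteqP; split => u; rewrite /pattern /= => -[-> ->].
Qed.

Lemma pattern_bigsetU F (pr : pred (seq bool)) :
  [set u | pr (map (Z^~ u) F)] =
  \big[setU/set0]_(c : (size F).-tuple bool | pr c) pattern F c.
Proof.
rewrite -bigcup_seq_cond; apply/seteqP; split => u /=.
  by exists (map_tuple (Z^~ u) (in_tuple F)); rewrite /= ?mem_index_enum.
by move=> [c /= /andP[_ prc] ->].
Qed.

Lemma determined_in (F : seq I) (phi : U -> bool) :
  (forall u u', {in F, forall i, Z i u = Z i u'} -> phi u = phi u') ->
  M [set u | phi u].
Proof.
move=> phiF.
pose pr c := `[< exists u0, phi u0 /\ map (Z^~ u0) F = c >].
rewrite (_ : [set u | phi u] = [set u | pr (map (Z^~ u) F)]).
  by rewrite pattern_bigsetU; apply: big_ind => // c _; apply: pattern_in.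
apply/seteqP; split => u /= h; first by apply/asboolP; exists u.
case/asboolP: h => u0 [phi_u0 /eq_in_map eqZ].
by rewrite -(phiF u0 u).
Qed.

End finitely_determined.

Section estimator.
Local Open Scope nat_scope.
Variable n : nat.
Implicit Types s : sample n.

(* Tree node [m >= 1] is coordinate [m.-1] of a sample, as in [qtree]. *)
Definition node_ones s (m : nat) : nat := \sum_(i < n) s i m.-1.

Definition path_ones s c L (t : nat -> bool) : nat :=
  \sum_(k < L) node_ones s (descend c t k).

Definition heavy_path s c L : bool :=
  [exists t : L.-tuple bool, n * L <= (path_ones s c L (nth false t)).*2].

Definition probe_len j := (j.+1).*2.

Fixpoint est_node s j : nat :=
  if j is j'.+1 then
    let c := (est_node s j').*2 in if heavy_path s c (probe_len j') then c else c.+1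
  else 1.

Definition agree_below K s s' := forall i m, m < K -> s i m = s' i m.

Lemma agree_below_le K K' s s' :
  K' <= K -> agree_below K s s' -> agree_below K' s s'.
Proof. by move=> le ss' i m mK; apply/ss'/(leq_trans mK). Qed.

Lemma path_ones_ext s c L t t' :
  {in gtn L, t =1 t'} -> path_ones s c L t = path_ones s c L t'.
Proof.
move=> tt'; apply: eq_bigr => k _; congr node_ones; apply: descend_ext => i ik.
by apply: tt'; rewrite inE (ltn_trans ik).
Qed.

Lemma heavy_path_local a L s s' c : c < 2 ^ a ->
  agree_below (2 ^ (a + L)) s s' -> heavy_path s c L = heavy_path s' c L.
Proof.
move=> ca ss'; apply: eq_existsb => t; congr (_ <= _.*2).
apply: eq_bigr => k _; apply: eq_bigr => i _; rewrite (ss' i) //.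
apply: leq_ltn_trans (leq_pred _) (leq_trans (descend_lt _ _ _) _).
apply: (@leq_trans (2 ^ (a + k))); first by rewrite expnD leq_mul2r ca orbT.
by rewrite leq_exp2l // leq_add2l ltnW.
Qed.

Lemma est_node_lt s j : est_node s j < 2 ^ j.+1.
Proof. by elim: j => [|j IH] //=; rewrite expnS; case: ifP; lia. Qed.

Lemma est_node_local j s s' :
  agree_below (2 ^ (3 * j + 4)) s s' -> est_node s j = est_node s' j.
Proof.
elim: j => [//|j IH] ss' /=.
have ss'_j : agree_below (2 ^ (3 * j + 4)) s s'.
  by apply: agree_below_le ss'; rewrite leq_exp2l //; lia.
rewrite -(IH ss'_j) (@heavy_path_local j.+2 _ s s') //.
  by have := est_node_lt s j; rewrite !expnS; lia.
by apply: agree_below_le ss'; rewrite leq_exp2l // /probe_len; lia.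
Qed.

End estimator.

Definition tree_estimator (R : realType) n (s : sample n) (k : nat) : R :=
  if [exists j : 'I_k.+1, est_node s j == k.+1] then 2 / 3 else 1 / 3.

Lemma tree_estimator_01 (R : realType) n (s : sample n) k :
  0 <= tree_estimator R s k <= 1.
Proof. by rewrite /tree_estimator; case: ifP => _; apply/andP; split; lra. Qed.

Lemma tree_estimator_local (R : realType) n k (s s' : sample n) :
  agree_below (2 ^ (3 * k + 4)) s s' -> tree_estimator R s k = tree_estimator R s' k.
Proof.
move=> ss'; rewrite /tree_estimator; congr (if _ then _ else _).
apply: eq_existsb => j; rewrite (@est_node_local n j s s') //.
by apply: agree_below_le ss'; rewrite leq_exp2l //; have := ltn_ord j; lia.
Qed.

Lemma tree_estimator_measurable (R : realType) n :
  estimator_measurable (@tree_estimator R n).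
Proof.
move=> k B _; set K := (2 ^ (3 * k + 4))%N.
rewrite (_ : _ @^-1` B = [set s | `[< B (tree_estimator R s k) >]]); last first.
  by apply/seteqP; split => s /= /asboolP.
apply: (@determined_in _ _ (fun (p : 'I_n * nat) s => s p.1 p.2) _ _ _ _ _
  [seq (i, m) | i <- enum 'I_n, m <- iota 0 K]).
- exact: sigma_algebra0.
- exact: sigma_algebraC.
- move=> A C MA MC; rewrite -bigcup2E.
  by apply: sigma_algebra_bigcup => -[|[|i]] //=; exact: sigma_algebra0.
- by move=> [i m]; apply: sub_sigma_algebra; exists i, m, true.
- move=> s s' ss'; congr asbool; congr B; apply: tree_estimator_local => i m mK.
  by apply: (ss' (i, m)); apply/allpairsP; exists (i, m); rewrite mem_enum mem_iota.
Qed.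

Definition bern_weight (R : realType) (q0 : R) (c : seq bool) : R :=
  \prod_(x <- c) (if x then q0 else 1 - q0).

Lemma bern_weight_third (R : realType) c :
  bern_weight (1 / 3 : R) c = (1 / 3) ^+ size c * 2 ^+ count negb c.
Proof.
elim: c => [|x c IH]; first by rewrite /bern_weight big_nil mulr1.
by rewrite /bern_weight big_cons -/(bern_weight _ c) IH; case: x; rewrite /= ?exprS; field.
Qed.

Lemma bern_weight_two_thirds (R : realType) c :
  bern_weight (2 / 3 : R) c = (1 / 3) ^+ size c * 2 ^+ count id c.
Proof.
elim: c => [|x c IH]; first by rewrite /bern_weight big_nil mulr1.
by rewrite /bern_weight big_cons -/(bern_weight _ c) IH; case: x; rewrite /= ?exprS; field.
Qed.

Lemma bern_weight_tail_le (R : realType) (q0 : R) c M : size c = M.*2 ->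
    q0 = 1 / 3 /\ (M <= count id c)%N \/ q0 = 2 / 3 /\ (count id c <= M)%N ->
  bern_weight q0 c <= (2 / 9) ^+ M.
Proof.
move=> sc q0c.
have -> : (2 / 9 : R) ^+ M = (1 / 3) ^+ size c * 2 ^+ M.
  by rewrite sc -mul2n exprM -exprMn; congr (_ ^+ _); field.
have le2X k : (k <= M)%N -> (2 : R) ^+ k <= 2 ^+ M by move=> ?; rewrite ler_eXn2l ?ltr1n.
case: q0c => -[-> cM]; rewrite ?bern_weight_third ?bern_weight_two_thirds;
  rewrite ler_pM2l ?exprn_gt0 // le2X //.
have : (count id c + count negb c = M.*2)%N := etrans (count_predC id c) sc.
lia.
Qed.

Lemma measure_bigsetU_le d (T : measurableType d) (R : realType)
    (mu : {measure set T -> \bar R}) (I : Type) (r : seq I) (P : pred I) (F : I -> set T) :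
  (forall i, P i -> measurable (F i)) ->
  (mu (\big[setU/set0]_(i <- r | P i) F i) <= \sum_(i <- r | P i) mu (F i))%E.
Proof.
move=> mF; elim: r => [|i r IH]; first by rewrite !big_nil measure0.
rewrite !big_cons; case: ifP => // Pi.
apply: le_trans (measureU2 _ _ _) (leeD _ IH) => //; first exact: mF.
exact: bigsetU_measurable.
Qed.

(* No measurability is needed: both integrals are suprema over the simple
   functions below the integrand. *)
Lemma ge0_le_integralT_nomeas d (T : measurableType d) (R : realType)
    (mu : {measure set T -> \bar R}) (f g : T -> \bar R) :
  (forall x, 0 <= f x)%E -> (forall x, f x <= g x)%E ->
  (\int[mu]_x f x <= \int[mu]_x g x)%E.
Proof.
move=> f0 fg; have g0 x : (0 <= g x)%E by apply: le_trans (fg x).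
rewrite !ge0_integralTE //; apply: ge_ereal_sup => _ [h hf <-].
apply: le_ereal_sup_tmp; exists (sintegral mu h) => //; exists h => // x.
exact: le_trans (hf x) (fg x).
Qed.

Lemma nneseries_geometric_le (R : realType) (x : R) : 0 < x <= 1 / 2 ->
  (\sum_(j <oo) (x ^+ j.+1)%:E <= (2 * x)%:E)%E.
Proof.
move=> /andP[x0 x_half]; apply: lime_le.
  by apply: is_cvg_nneseries => k _ _; rewrite lee_fin exprn_ge0 // ltW.
apply: nearW => N; rewrite sumEFin lee_fin.
have x_lt1 : `|x| < 1 by rewrite ger0_norm ?ltW //; lra.
have := geometric_le_lim N (ltW x0) x0 x_lt1.
rewrite /series /geometric /=; under eq_bigr do rewrite -exprS.
move/le_trans; apply; rewrite ler_pdivrMr ?subr_gt0; nra.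
Qed.

Lemma qtree_01 (R : realType) b k : 0 <= qtree R b k <= 1.
Proof. by rewrite /qtree; case: ifP => _; apply/andP; split; lra. Qed.

Lemma sup_err_ge0 (R : realType) (a q : nat -> R) : (0 <= sup_err a q)%E.
Proof. by apply: le_ereal_sup_tmp; exists (`|a 0%N - q 0%N|)%:E => //; exists 0%N. Qed.

Lemma sup_err_le1 (R : realType) (a q : nat -> R) :
  (forall k, 0 <= a k <= 1) -> (forall k, 0 <= q k <= 1) -> (sup_err a q <= 1)%E.
Proof.
move=> a01 q01; apply: ge_ereal_sup => _ [k _ <-]; rewrite lee_fin.
have /andP[a0 a1] := a01 k; have /andP[q0 q1] := q01 k.
by rewrite ler_norml; apply/andP; split; lra.
Qed.

Lemma sup_errxx (R : realType) (q : nat -> R) : sup_err q q = 0%E.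
Proof.
apply/eqP; rewrite eq_le sup_err_ge0 andbT.
by apply: ge_ereal_sup => _ [k _ <-]; rewrite subrr normr0.
Qed.

Section tree_model.
Variables (R : realType) (b : nat -> bool) (d : measure_display) (T : measurableType d)
  (P : probability T R) (X : nat -> nat -> T -> bool).
Hypothesis iidX : iid_product_bernoulli P (qtree R b) X.

Local Notation q := (qtree R b).
Local Notation Xs n w := (fun (i : 'I_n) (m : nat) => X (i : nat) m w).
Let Z (p : nat * nat) (w : T) := X p.1 p.2 w.

Lemma measurable_coord p : measurable [set w | Z p w].
Proof. by case: iidX => mX _ _; apply: mX. Qed.

Lemma measurable_determined (F : seq (nat * nat)) (phi : T -> bool) :
  (forall w w', {in F, forall p, Z p w = Z p w'} -> phi w = phi w') ->
  measurable [set w | phi w].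
Proof.
by apply: determined_in; [exact: measurable0 | exact: measurableC |
  exact: measurableU | exact: measurable_coord].
Qed.

Lemma measurable_pattern F c : measurable (pattern Z F c).
Proof.
by apply: pattern_in; [exact: measurable0 | exact: measurableC |
  exact: measurableU | exact: measurable_coord].
Qed.

Lemma prob_coord p x : P [set w | Z p w = x] = (if x then q p.2 else 1 - q p.2)%:E.
Proof.
case: iidX => _ PX _; case: x; first exact: PX.
rewrite (_ : [set _ | _] = ~` [set w | Z p w]).
  rewrite probability_setC; last exact: measurable_coord.
  by rewrite (_ : [set w | Z p w] = [set w | X p.1 p.2 w]) // PX EFinB.
by apply/seteqP; split => w /=; [move=> -> | move/negP/negbTE].
Qed.

Lemma prob_pattern F c q0 : uniq F -> size c = size F ->
  {in F, forall p, q p.2 = q0} -> P (pattern Z F c) = (bern_weight q0 c)%:E.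
Proof.
move=> uF sc qF; pose c' p := nth false c (index p F).
have -> : c = map c' F.
  apply: (@eq_from_nth _ false) => [|k kc]; first by rewrite size_map.
  by rewrite (nth_map (0, 0)%N) -?sc // /c' index_uniq -?sc.
have -> : pattern Z F (map c' F) = [set w | all (fun p => Z p w == c' p) F].
  apply/seteqP; split => w /=.
    by move/eq_in_map => eqZ; apply/allP => p /eqZ ->.
  by move/allP => eqZ; apply/eq_in_map => p /eqZ /eqP.
case: iidX => _ _ indepX; rewrite indepX // /bern_weight big_map -prodEFin.
by apply: eq_big_seq => p pF; rewrite -(qF p pF); exact: prob_coord.
Qed.

Lemma prob_pattern_tail F q0 M (pr : pred (seq bool)) :
  uniq F -> size F = M.*2 -> {in F, forall p, q p.2 = q0} ->
  (forall c, size c = M.*2 -> pr c -> bern_weight q0 c <= (2 / 9) ^+ M) ->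
  (P [set w | pr (map (Z^~ w) F)] <= ((8 / 9) ^+ M)%:E)%E.
Proof.
move=> uF sF qF wpr; rewrite pattern_bigsetU.
apply: le_trans; first by apply: measure_bigsetU_le => c _; apply: measurable_pattern.
apply: (@le_trans _ _ (\sum_(c : (size F).-tuple bool) ((2 / 9) ^+ M)%:E)).
  rewrite big_mkcond; apply: lee_sum => -[c /eqP sc] _ /=; case: ifP => prc.
    by rewrite (prob_pattern uF sc qF) lee_fin wpr // sc.
  by rewrite lee_fin exprn_ge0 //; lra.
rewrite sumEFin sumr_const card_tuple card_bool sF lee_fin -[_ *+ _]mulr_natl natrX.
by rewrite -mul2n exprM -exprMn (_ : 2 ^+ 2 * (2 / 9) = 8 / 9 :> R) // expr2; lra.
Qed.

Lemma qtree_on m : (0 < m)%N -> on_branch b m -> q m.-1 = 2 / 3.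
Proof. by move=> m0 mb; rewrite /qtree prednK // asboolT. Qed.

Lemma qtree_off m : (0 < m)%N -> ~ on_branch b m -> q m.-1 = 1 / 3.
Proof. by move=> m0 mb; rewrite /qtree prednK // asboolF. Qed.

Lemma left_child_off_branch j : b j -> ~ on_branch b (branch_node b j).*2.
Proof.
move=> bj [[|j'] /= e]; first by have := branch_node_gt0 b j; lia.
have bj'0 : b j' = false by move: e; case: (b j') => //=; lia.
have /branch_node_inj ej : branch_node b j' = branch_node b j by move: e; rewrite bj'0; lia.
by move: bj; rewrite -ej bj'0.
Qed.

Definition branch_tail j k := b (j.+1 + k).

Lemma left_child_gt0 j : (0 < (branch_node b j).*2)%N.
Proof. by rewrite double_gt0 branch_node_gt0. Qed.

Section sample_size.
Variable n : nat.
Local Notation v := (branch_node b).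
Local Notation L j := (probe_len j).

Definition path_coords c t L : seq (nat * nat) :=
  [seq (i, (descend c t k).-1) | k <- iota 0 L, i <- iota 0 n].

Lemma path_coords_uniq c t L : (0 < c)%N -> uniq (path_coords c t L).
Proof.
move=> c0; apply: allpairs_uniq; rewrite ?iota_uniq // => -[k i] [k' i'] _ _ /= [-> e].
have := descend_gt0 t k c0; have := descend_gt0 t k' c0.
by move=> *; rewrite (@descend_inj c t c0 k k') //; lia.
Qed.

Lemma size_path_coords c t L : size (path_coords c t L) = (L * n)%N.
Proof. by rewrite size_allpairs !size_iota. Qed.

Lemma path_ones_coords w c L t :
  path_ones (Xs n w) c L t = count id (map (Z^~ w) (path_coords c t L)).
Proof.
have iotaE m : iota 0 m = index_iota 0 m by rewrite /index_iota subn0.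
rewrite count_map -sum1_count big_mkcond big_allpairs_dep iotaE big_mkord.
apply: eq_bigr => k _; rewrite iotaE big_mkord.
by apply: eq_bigr => i _; rewrite /Z /=; case: X.
Qed.

Definition level_err j : set T :=
  [set w | heavy_path (Xs n w) (v j).*2 (L j) == b j].

Lemma measurable_level_err j : measurable (level_err j).
Proof.
set K := (2 ^ (j.+2 + L j))%N.
apply: (measurable_determined (F := [seq (i, m) | i <- iota 0 n, m <- iota 0 K])).
move=> w w' ww'; congr (_ == _); apply: (@heavy_path_local n j.+2).
  by have := branch_node_lt b j; rewrite !expnS; lia.
move=> i m mK; apply: (ww' (val i, m)).
by apply/allpairsP; exists (val i, m); rewrite !mem_iota ltn_ord mK.
Qed.

Lemma path_coords_left j t p : b j ->
  p \in path_coords (v j).*2 t (L j) -> q p.2 = 1 / 3.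
Proof.
move=> bj /allpairsP[[k i] [_ _ ->]] /=.
apply: qtree_off; first exact/descend_gt0/left_child_gt0.
exact: descend_off_branch (left_child_gt0 j) (left_child_off_branch bj).
Qed.

Lemma path_coords_branch j p : b j = false ->
  p \in path_coords (v j).*2 (branch_tail j) (L j) -> q p.2 = 2 / 3.
Proof.
move=> bj /allpairsP[[k i] [_ _ ->]] /=.
have -> : descend (v j).*2 (branch_tail j) k = v (j.+1 + k).
  by rewrite branch_nodeD /= bj addn0.
by apply: qtree_on; [exact: branch_node_gt0 | exists (j.+1 + k)%N].
Qed.

Definition heavy_event c t L : set T :=
  [set w | (n * L <= (count id (map (Z^~ w) (path_coords c t L))).*2)%N].

Lemma measurable_heavy_event c t L : measurable (heavy_event c t L).
Proof.
apply: (measurable_determined (F := path_coords c t L)) => w w' /eq_in_map eqZ.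
by rewrite eqZ.
Qed.

Lemma prob_heavy_left j t : b j ->
  (P (heavy_event (v j).*2 t (L j)) <= ((8 / 9) ^+ (n * j.+1))%:E)%E.
Proof.
move=> bj; apply: (prob_pattern_tail (q0 := 1 / 3)
  (pr := fun c => n * L j <= (count id c).*2)%N).
- exact/path_coords_uniq/left_child_gt0.
- by rewrite size_path_coords /probe_len; lia.
- by move=> p; apply: path_coords_left.
move=> c sc heavy_c; apply: bern_weight_tail_le => //; left; split => //.
by move: heavy_c; rewrite /probe_len; lia.
Qed.

Lemma prob_light_branch j : b j = false ->
  (P (~` heavy_event (v j).*2 (branch_tail j) (L j)) <=
    ((8 / 9) ^+ (n * j.+1))%:E)%E.
Proof.
move=> bj; rewrite (_ : ~` _ = [set w | ~~ (n * L j <= (count id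
    (map (Z^~ w) (path_coords (v j).*2 (branch_tail j) (L j)))).*2)%N]).
  apply: (prob_pattern_tail (q0 := 2 / 3)
    (pr := fun c => ~~ (n * L j <= (count id c).*2))%N).
  - exact/path_coords_uniq/left_child_gt0.
  - by rewrite size_path_coords /probe_len; lia.
  - by move=> p; apply: path_coords_branch.
  move=> c sc light_c; apply: bern_weight_tail_le => //; right; split => //.
  by move: light_c; rewrite /probe_len; lia.
by apply/seteqP; split => w /= /negP.
Qed.

Lemma level_err_left j : b j ->
  level_err j =
  \big[setU/set0]_(t : (L j).-tuple bool) heavy_event (v j).*2 (nth false t) (L j).
Proof.
move=> bj; rewrite /level_err -bigcup_seq; apply/seteqP; split => w /=; rewrite bj eqb_id.
  case/existsP => t; rewrite path_ones_coords => heavy_t.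
  by exists t => //; exact: mem_index_enum.
by case=> t _ heavy_t; apply/existsP; exists t; rewrite path_ones_coords.
Qed.

Lemma level_err_branch j : b j = false ->
  level_err j `<=` ~` heavy_event (v j).*2 (branch_tail j) (L j).
Proof.
rewrite /level_err /heavy_event => bj w /=; rewrite bj => /eqP light_path.
apply/negP; apply: contraFN light_path => heavy_branch.
have st : size (mkseq (branch_tail j) (L j)) == L j by rewrite size_mkseq.
apply/existsP; exists (Tuple st); rewrite (@path_ones_ext _ _ _ _ _ (branch_tail j)).
  by rewrite path_ones_coords.
by move=> k; rewrite inE => kL; rewrite /= nth_mkseq.
Qed.

Lemma prob_level_err j : (P (level_err j) <= ((4 * (8 / 9) ^+ n) ^+ j.+1)%:E)%E.
Proof.
have g89 : 0 <= (8 / 9 : R) ^+ n by rewrite exprn_ge0 //; lra.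
rewrite exprMn -exprM; case bj: (b j).
  rewrite level_err_left //.
  apply: le_trans; first by apply: measure_bigsetU_le => t _; exact: measurable_heavy_event.
  apply: le_trans; first by apply: lee_sum => t _; exact: prob_heavy_left.
  rewrite sumEFin sumr_const card_tuple card_bool lee_fin -[_ *+ _]mulr_natl natrX.
  by rewrite /probe_len -mul2n exprM (_ : 2 ^+ 2 = 4 :> R) // expr2; lra.
apply: le_trans (_ : _ <= ((8 / 9) ^+ (n * j.+1))%:E)%E _.
  apply: le_trans (prob_light_branch bj); apply: le_measure (level_err_branch bj).
  - by rewrite inE; exact: measurable_level_err.
  - by rewrite inE; apply/measurableC/measurable_heavy_event.
by rewrite lee_fin ler_peMl ?exprn_ge0 ?exprn_ege1 //; lra.
Qed.

Lemma est_node_exact w : (forall j, ~ level_err j w) ->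
  forall j, est_node (Xs n w) j = v j.
Proof.
move=> ok; elim=> [//|j IH] /=; rewrite IH.
have := ok j; rewrite /level_err /=.
by case: (b j); case: heavy_path; rewrite ?addn0 ?addn1.
Qed.

Lemma tree_estimator_exact w : (forall j, ~ level_err j w) ->
  tree_estimator R (Xs n w) = q.
Proof.
move=> ok; apply/funext => k; rewrite /tree_estimator /qtree.
congr (if _ then _ else _); apply/existsP/asboolP => [[j /eqP ej] | [j ej]].
  by exists j; rewrite -(est_node_exact ok).
have jk : (j < k.+1)%N by rewrite -ej branch_node_gt.
by exists (Ordinal jk); rewrite /= (est_node_exact ok) ej.
Qed.

Lemma expected_sup_err_le : 4 * (8 / 9 : R) ^+ n <= 1 / 2 ->
  (\int[P]_w sup_err (tree_estimator R (Xs n w)) q <= (8 * (8 / 9) ^+ n)%:E)%E.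
Proof.
move=> x_half; pose err := \bigcup_j level_err j.
have merr : measurable err by apply: bigcupT_measurable => j; exact: measurable_level_err.
have le_indic : (\int[P]_w sup_err (tree_estimator R (Xs n w)) q <=
    \int[P]_w (\1_err w : R)%:E)%E.
  apply: ge0_le_integralT_nomeas => w; first exact: sup_err_ge0.
  rewrite indicE; case: (boolP (w \in err)) => [_ | /negP w_ok].
    by apply: sup_err_le1 => k; [exact: tree_estimator_01 | exact: qtree_01].
  rewrite tree_estimator_exact ?sup_errxx // => j errj.
  by apply: w_ok; rewrite inE; exists j.
apply: le_trans le_indic _; rewrite integral_indic // setIT.
apply: le_trans.
  apply: (@measure_sigma_subadditive _ _ _ P err level_err) => //.
  exact: measurable_level_err.
apply: le_trans.
  by apply: (lee_nneseries (v := fun j => ((4 * (8 / 9) ^+ n) ^+ j.+1)%:E)) => // j _;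
    exact: prob_level_err.
rewrite (_ : 8 * (8 / 9) ^+ n = 2 * (4 * (8 / 9) ^+ n) :> R); last by lra.
by apply: nneseries_geometric_le; rewrite x_half andbT mulr_gt0 // exprn_gt0 //; lra.
Qed.

End sample_size.

End tree_model.

Theorem mainTheorem7 (R : realType) :
  exists A : forall n : nat, sample n -> nat -> R,
    (forall n (s : sample n) j, 0 <= A n s j <= 1) /\
    (forall n, estimator_measurable (A n)) /\
    (forall (b : nat -> bool) (d : measure_display) (T : measurableType d)
            (P : probability T R) (X : nat -> nat -> T -> bool),
        iid_product_bernoulli P (qtree R b) X ->
        (fun n : nat =>
           (\int[P]_w sup_err (A n (fun (i : 'I_n) (m : nat) => X (i : nat) m w))
                              (qtree R b))%E)
          @ \oo --> 0%E).
Proof.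
exists (fun n => @tree_estimator R n); split; first exact: tree_estimator_01.
split; first exact: tree_estimator_measurable.
move=> b d T P X iidX.
have geo a : geometric a (8 / 9 : R) @ \oo --> 0.
  by apply: cvg_geometric; rewrite ger0_norm; lra.
apply: (squeeze_cvge (f := cst 0%E) (h := fun n => (geometric 8 (8 / 9) n)%:E)).
- have := cvgr_lt 0 (geo 4) (1 / 2) ltac:(lra).
  apply: filterS => n small; rewrite integral_ge0 => [|w _]; last exact: sup_err_ge0.
  exact: (expected_sup_err_le iidX (ltW small)).
- exact: cvg_cst.
- by apply: cvg_EFin; [exact: nearW | exact: geo].
Qed.
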